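(* Let $\Psi$ be a family of real-valued functions with $\sup_{f\in\Psi}\mathrm{Var}[f(X)]\le\sigma^2$ for some $\sigma^2>0$, and let $\mathscr{X}=\{X^f:=m_f-\hat\mu_f:\ f\in\Psi\}$. There exist constants $C_1,C_2,C_3,C_4>0$ depending only on $\sigma^2$ such that the following holds. Let $\varepsilon\in(0,1)$ and suppose that (i) $\mathscr{X}$ is an exponential class whose bracketing covering numbers satisfy $N(\delta)\le C\exp(M\delta^{-2})$ for all $0<\delta\le n$, for some constants $C,M>0$; and (ii) writing $a=\frac{n^2\varepsilon}{C_2}\wedge\frac{n}{4}$, $$\frac{n^{3/2}\varepsilon^2}{C_1}\ \ge\ \Big\{\sqrt{M}\,\log\!\Big(\frac{n}{a}\Big)+\sqrt{\log C}\,(n-a)\,\mathbf 1_{\{C>1\}}\Big\}\vee n^{1/2}.$$ Then $$\mathbb{P}\Big(\sup_{f\in\Psi}|m_f-\hat\mu_f|\ge n^2\varepsilon\Big)\le C_3\exp\Big(-\frac{n\varepsilon^2}{C_4}\Big),$$ where $\mathbb P$ is understood as outer probability if $\Psi$ is uncountable.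
   Context: $(X_i)_{i=1}^n$ are i.i.d. real random variables on $(\Omega,\mathcal F,\mathbb P)$, and $X$ is independent of them with the same distribution. For a real function $f$, $m_f=\mathbb E f(X)$. Let $\phi:\mathbb R\to\mathbb R$ be non-decreasing, differentiable, with $-\log(1-x+x^2/2)\le\phi(x)\le\log(1+x+x^2/2)$ for all $x$. For a parameter $\alpha>0$, set $\hat r_f(\mu)=\frac{1}{n\alpha}\sum_{i=1}^n\phi(\alpha(f(X_i)-\mu))$; Catoni's estimator $\hat\mu_f$ is a value (chosen arbitrarily if not unique) with $\hat r_f(\hat\mu_f)=0$. Standing assumption (used in the paper as a consequence of Catoni's deviation bound with suitable $\alpha$): for every $f\in\Psi$ and every $x>0$, $\mathbb P(|m_f-\hat\mu_f|\ge x)\le 2\exp\big(-\frac{nx^2}{2(\sigma^2+x^2)}\big)$. Distance: for $X^f,X^{f'}\in\mathscr X$, $d(X^f,X^{f'})=\|X^f-X^{f'}\|$, where $\|\cdot\|$ is the essential supremum norm on $\Omega$ (assumed finite on $\mathscr X$). Bracketing entropy: for $\delta>0$, $N(\delta)$ is the smallest $m$ such that there are pairs $[D_j^L,D_j^U]\in\mathscr X\times\mathscr X$, $j=1,\dots,m$, with the property that for each element $D\in\mathscr X$ there is $j$ with $D_j^L\le D\le D_j^U$ and $d(D_j^L,D_j^U)\le\delta$. $H(\delta)=\log N(\delta)$. $\mathscr X$ is called an exponential class if $N(\kappa)\le A\exp(B\kappa^{-r})$ for all $0<\kappa\le n$, for some constants $A,B,r>0$. *)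

From HB Require Import structures.
From mathcomp Require Import all_boot all_order all_algebra.
From mathcomp Require Import all_classical all_reals all_analysis ess_sup_inf.
Set Implicit Arguments. Unset Strict Implicit. Unset Printing Implicit Defensive.
Import Order.TTheory GRing.Theory Num.Theory.
Import numFieldNormedType.Exports.
Local Open Scope classical_set_scope.
Local Open Scope ring_scope.

Section defs.
Context {d : measure_display} {T : measurableType d} {R : realType}.
Variable P : probability T R.

Definition outer_prob (A : set T) : \bar R :=
  ereal_inf [set P B | B in [set B | measurable B /\ A `<=` B]].

Definition mutually_independent (I : finType) (Y : I -> T -> R) : Prop :=
  forall (J : {set I}) (B : I -> set R), (forall i, measurable (B i)) ->
    P (\bigcap_(i in [set i | i \in J]) (Y i @^-1` B i)) =
    (\prod_(i in J) P (Y i @^-1` B i))%E.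

Definition same_distribution (Y Z : T -> R) : Prop :=
  forall B : set R, measurable B -> P (Y @^-1` B) = P (Z @^-1` B).

Definition mean_of (X : T -> R) (f : R -> R) : R := fine ('E_P[f \o X])%E.

Definition catoni_r (phi : R -> R) (alpha : R) (n : nat) (Xs : nat -> T -> R)
  (f : R -> R) (w : T) (mu : R) : R :=
  (n%:R * alpha)^-1 * \sum_(i < n) phi (alpha * (f (Xs i w) - mu)).

Definition ess_dist (U V : T -> R) : \bar R :=
  ess_sup P (fun w => (`|U w - V w|)%:E).

Definition bracketing_number (S : set (T -> R)) (delta : R) : \bar R :=
  ereal_inf [set (m%:R)%:E | m in
    [set m : nat | exists L U : nat -> T -> R,
       (forall j, (j < m)%N -> [/\ S (L j), S (U j) & (ess_dist (L j) (U j) <= delta%:E)%E]) /\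
       (forall D, S D -> exists2 j, (j < m)%N & forall w, L j w <= D w <= U j w)]].
End defs.

From HB Require Import structures.
From mathcomp Require Import all_boot all_order all_algebra.
From mathcomp Require Import all_classical all_reals all_analysis ess_sup_inf.
From mathcomp Require Import measurable_realfun ring lra.
Set Implicit Arguments. Unset Strict Implicit. Unset Printing Implicit Defensive.
Import Order.TTheory GRing.Theory Num.Theory.
Import numFieldNormedType.Exports.
Local Open Scope classical_set_scope.
Local Open Scope ring_scope.

(** One bracketing scale suffices. Cover the class by brackets of width
    [delta = n]; there are fewer than [C exp(M/n^2) + 1] of them, and their
    endpoints [L_j], [U_j] belong to the class, so each obeys the deviation
    bound at level [x = n^2 eps]. On a bracket [|X^f| <= max(|L_j|, |U_j|)],
    hence [sup_f |X^f| >= x] forces [|L_j| >= x] or [|U_j| >= x] for some [j],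
    and a union bound gives [4 (C exp(M/n^2) + 1) exp(-n eps^2/(2(1+sigma2)))].
    Condition (ii) makes [ln C] and [M/n^2] at most [1/9] and [1/16] of
    [n eps^2/(1+sigma2)], which leaves [8 exp(-n eps^2/(4(1+sigma2)))]. *)

Section real_inequalities.
Variable R : realType.
Implicit Types x y k s e N M C a t v p : R.

Lemma ln4_ge1 : 1 <= ln (4 : R).
Proof.
have half_le2 : expR (2^-1 : R) <= 2.
  have := expR_ge1Dx (- 2^-1 : R).
  have : expR (2^-1 : R) * expR (- 2^-1) = 1 by rewrite -expRD subrr expR0.
  have := expR_gt0 (2^-1 : R); nra.
rewrite -[X in X <= _](expRK 1) ler_ln ?posrE ?expR_gt0 //.
rewrite (_ : 1 = 2^-1 + 2^-1); last by field.
by rewrite expRD; have := expR_gt0 (2^-1 : R); nra.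
Qed.

Lemma sqrtr_mul_le_sqr x k y : 0 <= x -> 0 <= k ->
  Num.sqrt x * k <= y -> x * k ^+ 2 <= y ^+ 2.
Proof.
move=> x0 k0 le_y; rewrite -[x in x * _](sqr_sqrtr x0) -exprMn.
have := mulr_ge0 (sqrtr_ge0 x) k0; nra.
Qed.

Lemma sqr_powR3_2 x : 0 <= x -> (x `^ (3 / 2)) ^+ 2 = x ^+ 3.
Proof.
move=> x0; rewrite -powR_mulrn ?powR_ge0 // -powRrM.
by rewrite (_ : 3 / 2 * 2%:R = 3%:R) ?powR_mulrn //; field.
Qed.

Lemma sqr_condition_rhs_le s N e : 1 <= s -> 0 <= N -> 0 <= e <= 1 ->
  (N `^ (3 / 2) * e ^+ 2 / (4 * s)) ^+ 2 <= N ^+ 3 * e ^+ 2 / (16 * s).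
Proof.
move=> s1 N0 /andP[e0 e1].
rewrite expr_div_n exprMn sqr_powR3_2 // -exprM.
rewrite ler_pdivrMr ?exprn_gt0 ?mulr_gt0 //; last lra.
rewrite (_ : _ * (4 * s) ^+ 2 = N ^+ 3 * e ^+ 2 * s); last by field; lra.
have N3e2 : 0 <= N ^+ 3 * e ^+ 2 by rewrite mulr_ge0 ?exprn_ge0.
apply: le_trans (ler_peMr N3e2 s1).
by rewrite ler_wpM2l ?exprn_ge0 // exprM expr2 ler_piMr ?exprn_ge0 ?expr_le1.
Qed.

Lemma catoni_condition_budget s N e M C a :
  1 <= s -> 1 <= N -> 0 < e <= 1 -> 0 <= M -> 0 < a <= N / 4 ->
  Num.max (Num.sqrt M * ln (N / a)
             + (if 1 < C then Num.sqrt (ln C) * (N - a) else 0))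
          (Num.sqrt N)
    <= N `^ (3 / 2) * e ^+ 2 / (4 * s) ->
  M / N ^+ 2 <= N * e ^+ 2 / s / 16 /\ ln (Num.max 1 C) <= N * e ^+ 2 / s / 9.
Proof.
move=> s1 N1 /andP[e0 e1] M0 /andP[a0 aN]; rewrite ge_max => /andP[cond _].
set u := _ / (4 * s) in cond.
have N0 : 0 < N by lra.
have N2 : 0 < N ^+ 2 by rewrite exprn_gt0.
have u2 : u ^+ 2 <= N ^+ 3 * e ^+ 2 / (16 * s).
  by apply: sqr_condition_rhs_le; rewrite ?(ltW N0) ?(ltW e0).
have lnNa : 1 <= ln (N / a).
  apply: le_trans ln4_ge1 _; rewrite ler_ln ?posrE ?divr_gt0 //.
  rewrite ler_pdivlMr //; lra.
have extra0 : 0 <= (if 1 < C then Num.sqrt (ln C) * (N - a) else 0).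
  by case: ifP => // _; rewrite mulr_ge0 ?sqrtr_ge0 // subr_ge0; lra.
have rhsE k : 0 < k ->
    N * e ^+ 2 / s / k * N ^+ 2 = N ^+ 3 * e ^+ 2 / (16 * s) * (16 / k).
  by move=> k0; rewrite exprS; field; lra.
split.
  have MlnNa : M * ln (N / a) ^+ 2 <= u ^+ 2.
    apply: sqrtr_mul_le_sqr; [exact: M0 | lra | ].
    by apply: le_trans cond; rewrite lerDl.
  have MlnNa_ge : M <= M * ln (N / a) ^+ 2.
    by rewrite ler_peMr // expr_ge1 // (le_trans ler01 lnNa).
  rewrite ler_pdivrMr // rhsE // divff // mulr1; lra.
case: (ltrP 1 C) => C1; last by rewrite ln1 !divr_ge0 ?mulr_ge0 ?sqr_ge0; lra.
have lnC0 : 0 <= ln C by rewrite ltW // ln_gt0.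
have lnCNa : ln C * (N - a) ^+ 2 <= u ^+ 2.
  apply: sqrtr_mul_le_sqr; [exact: lnC0 | lra | ].
  by apply: le_trans cond; rewrite C1 lerDr mulr_ge0 ?sqrtr_ge0 //; lra.
have NaN : 9 * N ^+ 2 <= 16 * (N - a) ^+ 2 by nra.
rewrite -(ler_pM2r N2) rhsE //; nra.
Qed.

Lemma deviation_exponent_le (sigma2 N e : R) : 0 < sigma2 -> 1 <= N -> 0 < e < 1 ->
  expR (- (N * (N ^+ 2 * e) ^+ 2) / (2 * (sigma2 + (N ^+ 2 * e) ^+ 2)))
    <= expR (- (N * e ^+ 2 / (1 + sigma2)) / 2).
Proof.
move=> s0 N1 /andP[e0 e1]; set x := N ^+ 2 * e.
have ex : e <= x.
  by rewrite /x ler_peMl ?(ltW e0) // expr2; nra.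
have x0 : 0 < x by lra.
have D0 : 0 < sigma2 + x ^+ 2 by have := sqr_ge0 x; lra.
rewrite ler_expR !mulNr lerN2 ler_pdivrMr // -mulrA.
rewrite (_ : _ / (2 * _) * 2 = N * (x ^+ 2 / (sigma2 + x ^+ 2))); last by field; lra.
apply: ler_wpM2l; first lra.
rewrite ler_pdivrMr; last lra.
rewrite mulrAC ler_pdivlMr //.
have e2x2 : e ^+ 2 <= x ^+ 2 by rewrite !expr2; nra.
have e21 : e ^+ 2 <= 1 by rewrite expr_le1 // ltW.
have : 0 <= sigma2 * (x ^+ 2 - e ^+ 2) by rewrite mulr_ge0 ?subr_ge0 // ltW.
have : 0 <= x ^+ 2 * (1 - e ^+ 2) by rewrite mulr_ge0 ?subr_ge0 ?sqr_ge0.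
lra.
Qed.

Lemma bracket_count_tail_le (m : nat) C t v p : 0 < C -> 0 <= t -> 0 <= p ->
  m%:R < C * expR t + 1 -> t <= v / 16 -> ln (Num.max 1 C) <= v / 9 ->
  p <= expR (- v / 2) -> m%:R * (2 * (2 * p)) <= 8 * expR (- v / 4).
Proof.
move=> C0 t0 p0 mC tv Cv pv; set K := Num.max 1 C.
have K1 : 1 <= K by rewrite le_max lexx.
have CK : C <= K by rewrite le_max lexx orbT.
have Et : 1 <= expR t by apply: le_trans (expR_ge1Dx t); lra.
have count : m%:R <= 2 * expR (ln K + t).
  rewrite expRD lnK ?posrE; last lra.
  have := ler_wpM2r (ltW (expR_gt0 t)) CK.
  have : 1 <= K * expR t by rewrite -[1]mulr1 ler_pM.
  lra.
have lnK0 : 0 <= ln K by rewrite ln_ge0.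
have exponent : ln K + t + - v / 2 <= - v / 4 by lra.
apply: le_trans (_ : 2 * expR (ln K + t) * (4 * expR (- v / 2)) <= _).
  by apply: ler_pM => //; lra.
rewrite (_ : _ * (4 * _) = 8 * expR (ln K + t + - v / 2)); last by rewrite !expRD; ring.
by rewrite ler_pM2l // ler_expR.
Qed.

End real_inequalities.


Lemma normr_le_bracket (R : realDomainType) (a y b : R) :
  a <= y <= b -> `|y| <= Num.max `|a| `|b|.
Proof.
move=> /andP[ay yb]; rewrite le_max; have [y0|y0] := leP 0 y.
  by rewrite ger0_norm // (le_trans yb (ler_norm b)) orbT.
by rewrite ltr0_norm // ler_normr lerN2 ay orbT.
Qed.

Section bracketing_bound.
Context d (T : measurableType d) (R : realType) (P : probability T R).

Lemma outer_prob_le_measure (A B : set T) :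
  measurable B -> A `<=` B -> (outer_prob P A <= P B)%E.
Proof. by move=> mB AB; apply: ereal_inf_lbound; exists B. Qed.

Lemma bracketing_cover_of_le (S : set (T -> R)) delta b :
  (bracketing_number P S delta <= b%:E)%E ->
  exists m (L U : nat -> T -> R), [/\ m%:R < b + 1,
    forall j, (j < m)%N -> S (L j) /\ S (U j) &
    forall D, S D -> exists2 j, (j < m)%N & forall w, L j w <= D w <= U j w].
Proof.
move=> /le_lt_trans/(_ (_ : b%:E < (b + 1)%:E)%E).
move=> /(_ _)/ereal_inf_lt[|_ [m [L [U [LU cover]]]] <-]; first by rewrite lte_fin ltrDl.
rewrite lte_fin => mb; exists m, L, U; split => // j jm.
by have [] := LU j jm.
Qed.

Lemma measurable_norm_ge (V : T -> R) x :
  measurable_fun setT V -> measurable [set w | x <= `|V w|].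
Proof.
move=> mV; have mnV : measurable_fun setT (fun w => `|V w|).
  by apply: measurableT_comp mV; apply: normr_measurable.
rewrite -[X in measurable X]setTI.
have -> : [set w | x <= `|V w|] = (fun w => `|V w|) @^-1` `[x, +oo[.
  by apply/seteqP; split => w /=; rewrite in_itv /= andbT.
exact: mnV measurableT _ (measurable_itv _).
Qed.

Variables (I : Type) (F : I -> T -> R) (Psi : set I) (x b : R).
Hypotheses (x_gt0 : 0 < x)
  (measF : forall f, Psi f -> measurable_fun setT (F f))
  (tailF : forall f, Psi f -> (P [set w | (x <= `|F f w|)%R] <= b%:E)%E).
Let S := [set V | exists2 f, Psi f & V = F f].
Variables (m : nat) (L U : nat -> T -> R).
Hypotheses (LU_in : forall j, (j < m)%N -> S (L j) /\ S (U j))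
  (LU_cover : forall D, S D -> exists2 j, (j < m)%N & forall w, L j w <= D w <= U j w).

Let bracket_event j := [set w | x <= `|L j w|] `|` [set w | x <= `|U j w|].

Lemma sup_norm_ge_sub_bracket_events :
  [set w | (x%:E <= ereal_sup [set `|F f w|%:E | f in Psi])%E]
    `<=` \big[setU/set0]_(j < m) bracket_event j.
Proof.
move=> w /= x_le_sup.
pose G := \big[Num.max/0]_(j < m) Num.max `|L j w| `|U j w|.
have sup_le_G : (ereal_sup [set `|F f w|%:E | f in Psi] <= G%:E)%E.
  apply: ge_ereal_sup => _ [f Pf <-]; rewrite lee_fin.
  have [j jm /(_ w) LFU] := LU_cover (ex_intro2 _ _ f Pf erefl).
  have := normr_le_bracket LFU => /le_trans; apply.
  exact: (le_bigmax _ (fun j : 'I_m => Num.max `|L j w| `|U j w|) (Ordinal jm)).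
have : x <= G by rewrite -lee_fin (le_trans x_le_sup sup_le_G).
move=> /bigmax_geP[x_le0 | [j _ xj]]; first by have := lt_le_trans x_gt0 x_le0; rewrite ltxx.
rewrite -bigcup_mkord; exists j => //=.
by move: xj; rewrite le_max => /orP[]; [left | right].
Qed.

Lemma outer_prob_sup_norm_ge_le :
  (outer_prob P [set w | (x%:E <= ereal_sup [set `|F f w|%:E | f in Psi])%E]
    <= (m%:R * (2 * b))%:E)%E.
Proof.
have event_le j : (j < m)%N -> measurable (bracket_event j) /\
    (P (bracket_event j) <= (2 * b)%:E)%E.
  move=> jm; rewrite /bracket_event; have [[f Pf ->] [g Pg ->]] := LU_in jm.
  have mf := measurable_norm_ge x (measF Pf); have mg := measurable_norm_ge x (measF Pg).
  split; first exact: measurableU.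
  apply: le_trans (measureU2 _ mf mg) _.
  by rewrite mulr_natl mulr2n EFinD leeD ?tailF.
apply: le_trans (outer_prob_le_measure _ sup_norm_ge_sub_bracket_events) _.
  by apply: bigsetU_measurable => j _; have [] := event_le j (ltn_ord j).
apply: le_trans (Boole_inequality P (A := bracket_event) (fun j jm => (event_le j jm).1)) _.
apply: le_trans (_ : _ <= \sum_(j < m) (2 * b)%:E)%E _.
  by apply: lee_sum => j _; exact: (event_le j (ltn_ord j)).2.
by rewrite sumEFin sumr_const card_ord (mulr_natl (2 * b)).
Qed.

End bracketing_bound.

Theorem theorem1 (R : realType) (sigma2 : R) : 0 < sigma2 ->
  exists C1 C2 C3 C4 : R, [/\ 0 < C1, 0 < C2, 0 < C3, 0 < C4 &
  forall (d : measure_display) (T : measurableType d) (P : probability T R)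
    (n : nat) (Xs : nat -> T -> R) (X : T -> R)
    (phi : R -> R) (alpha : R) (Psi : set (R -> R)) (muhat : (R -> R) -> T -> R)
    (eps C M : R),
  (* sample: X, X_1..X_n i.i.d. real random variables *)
  (0 < n)%N ->
  measurable_fun setT X ->
  (forall i, (i < n)%N -> measurable_fun setT (Xs i)) ->
  (forall i, (i < n)%N -> same_distribution P (Xs i) X) ->
  mutually_independent P
    (fun o : option 'I_n => match o with None => X | Some i => Xs i end) ->
  (* Catoni's influence function and parameter *)
  {homo phi : x y / x <= y} ->
  (forall x, derivable phi x 1) ->
  (forall x, - ln (1 - x + x ^+ 2 / 2) <= phi x <= ln (1 + x + x ^+ 2 / 2)) ->
  0 < alpha ->
  (* the class Psi, with sup Var f(X) <= sigma2 *)
  (forall f, Psi f -> measurable_fun setT f) ->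
  (forall f, Psi f -> (f \o X) \in Lfun P 2%:E) ->
  (forall f, Psi f -> ('V_P[f \o X] <= sigma2%:E)%E) ->
  (* Catoni's estimators: a root of r_f, measurable *)
  (forall f, Psi f -> forall w, catoni_r phi alpha n Xs f w (muhat f w) = 0) ->
  (forall f, Psi f -> measurable_fun setT (muhat f)) ->
  (* standing deviation assumption *)
  (forall f, Psi f -> forall x, 0 < x ->
     (P [set w | (x <= `|mean_of P X f - muhat f w|)%R]
       <= (2 * expR (- (n%:R * x ^+ 2) / (2 * (sigma2 + x ^+ 2))))%:E)%E) ->
  (* the essential supremum norm is finite on the class *)
  (forall f, Psi f ->
     (ess_sup P (fun w => (`|mean_of P X f - muhat f w|)%:E) < +oo)%E) ->
  0 < eps < 1 ->
  (* (i) bracketing bound *)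
  0 < C -> 0 < M ->
  (forall delta, 0 < delta <= n%:R ->
     (bracketing_number P
        [set Xf | exists2 f, Psi f & Xf = (fun w => mean_of P X f - muhat f w)%R]
        delta <= (C * expR (M * delta ^- 2))%:E)%E) ->
  (* (ii) *)
  (let a := Num.min (n%:R ^+ 2 * eps / C2) (n%:R / 4) in
   Num.max (Num.sqrt M * ln (n%:R / a)
              + (if 1 < C then Num.sqrt (ln C) * (n%:R - a) else 0))
           (Num.sqrt n%:R)
   <= n%:R `^ (3 / 2) * eps ^+ 2 / C1) ->
  (outer_prob P
     [set w | ((n%:R ^+ 2 * eps)%:E
               <= ereal_sup [set (`|mean_of P X f - muhat f w|)%:E | f in Psi])%E]
   <= (C3 * expR (- (n%:R * eps ^+ 2) / C4))%:E)%E].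
Proof.
move=> sigma2_gt0; pose s := 1 + sigma2.
have s1 : 1 <= s by rewrite /s lerDl ltW.
exists (4 * s), 1, 8, (4 * s); split; rewrite ?mulr_gt0 //; try lra.
move=> d T P n Xs X phi alpha Psi muhat eps C M n_gt0 _ _ _ _ _ _ _ _ _ _ _ _
  meas_muhat deviation _ /andP[eps_gt0 eps_lt1] C_gt0 M_gt0 bracketing /= cond.
have N1 : 1 <= n%:R :> R by rewrite ler1n.
have a_bounds : 0 < Num.min (n%:R ^+ 2 * eps / 1) (n%:R / 4) <= n%:R / 4.
  by rewrite ge_min lexx orbT andbT lt_min !divr_gt0 ?mulr_gt0 ?exprn_gt0 //; lra.
have [|budget_M budget_C] :=
  catoni_condition_budget s1 N1 (_ : 0 < eps <= 1) (ltW M_gt0) a_bounds cond.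
  by rewrite eps_gt0 ltW.
have [|m [L [U [m_lt L_U cover]]]] := bracketing_cover_of_le (bracketing n%:R _).
  by rewrite lexx andbT; lra.
have x_gt0 : 0 < n%:R ^+ 2 * eps by rewrite mulr_gt0 ?exprn_gt0 //; lra.
have meas_dev f : Psi f -> measurable_fun setT (fun w => mean_of P X f - muhat f w).
  by move=> Pf; apply: measurable_funB => //; exact: meas_muhat.
have := outer_prob_sup_norm_ge_le x_gt0 meas_dev
  (fun f Pf => deviation f Pf _ x_gt0) L_U cover.
move=> /le_trans; apply; rewrite lee_fin.
rewrite (_ : - (n%:R * eps ^+ 2) / (4 * s) = - (n%:R * eps ^+ 2 / s) / 4); last by field; lra.
apply: bracket_count_tail_le m_lt budget_M budget_C _ => //.
- by rewrite divr_ge0 ?exprn_ge0 // ltW.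
- by apply: deviation_exponent_le; rewrite ?eps_gt0.
Qed.
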